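(* Let $A\in\mathbb{R}^{m\times n}_+$ with every row containing a positive entry, $n\ge2$, $(r,c)\in\mathbb{R}^m_{+}\times\mathbb{R}^n_{+}$ with $\langle r,1_m\rangle=\langle c,1_n\rangle$, and $y\in\mathbb{R}^n_{++}$. Order the indices so that $c^{A,r}(y)-c$ is non-decreasing, and let $T$ be a prefix set $\{1,\dots,k\}$, $1\le k\le n-1$, with maximum margin $\gamma$ among such prefix sets. Then \[\gamma^2\ge\frac{1}{2n^3}\|c^{A,r}(y)-c\|_2^2.\]
   Context: For $y\in\mathbb{R}^n_{++}$, $c^{A,r}_j(y):=\sum_{i\in[m]}r_i\frac{A_{ij}y_j}{\sum_{k\in[n]}A_{ik}y_k}$. The margin of $T\subseteq[n]$ is the largest $\gamma\ge0$ such that some $\nu\in\mathbb{R}$ satisfies $\max_{j\in T}(c^{A,r}_j(y)-c_j)\le\nu-\gamma\le\nu+\gamma\le\min_{j\notin T}(c^{A,r}_j(y)-c_j)$. *)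

From HB Require Import structures.
From mathcomp Require Import all_boot all_order all_algebra all_fingroup.
Set Implicit Arguments. Unset Strict Implicit. Unset Printing Implicit Defensive.
Import Order.TTheory GRing.Theory Num.Theory.
Local Open Scope ring_scope.

Section Defs.
Variable R : realFieldType.

Definition cAr (m n : nat) (A : 'M[R]_(m, n)) (r : 'I_m -> R)
  (y : 'I_n -> R) (j : 'I_n) : R :=
  \sum_(i < m) r i * (A i j * y j / (\sum_(k < n) A i k * y k)).

Definition margin_cond (n : nat) (f : 'I_n -> R) (T : {set 'I_n}) (g : R) : Prop :=
  0 <= g /\ exists nu : R,
    (forall j, j \in T -> f j <= nu - g) /\ nu - g <= nu + g /\
    (forall j, j \notin T -> nu + g <= f j).

Definition is_margin (n : nat) (f : 'I_n -> R) (T : {set 'I_n}) (g : R) : Prop :=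
  margin_cond f T g /\ forall g', margin_cond f T g' -> g' <= g.

End Defs.

Definition prefix_set (n : nat) (s : 'S_n) (k : nat) : {set 'I_n} :=
  [set s i | i : 'I_n & (i < k)%N].

From HB Require Import structures.
From mathcomp Require Import all_boot all_order all_algebra all_fingroup.
From mathcomp Require Import lra ring zify.
Set Implicit Arguments. Unset Strict Implicit.
Import Order.TTheory GRing.Theory Num.Theory.
Local Open Scope ring_scope.

(** The prefix sets are exactly the cuts between consecutive values of the
sorted vector f := c^{A,r}(y) - c, and the margin of the cut after position
k - 1 is half the gap f_(k) - f_(k-1).  Maximality of gamma bounds every gap by
2 gamma, so all values of f lie within 2 gamma n of each other.  Since f sums
to zero (the row masses r are redistributed exactly onto the columns),
Lagrange's identity gives 2 n |f|^2 = sum_(j,k) (f_j - f_k)^2 <= n^2 (2 gamma n)^2. *)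

Lemma sum_cAr (R : realFieldType) (m n : nat) (A : 'M[R]_(m, n))
    (r : 'I_m -> R) (y : 'I_n -> R) :
  (forall i j, 0 <= A i j) -> (forall i, exists j, 0 < A i j) ->
  (forall j, 0 < y j) ->
  \sum_(j < n) cAr A r y j = \sum_(i < m) r i.
Proof.
move=> A_ge0 A_row y_gt0; rewrite /cAr exchange_big /=.
apply: eq_bigr => i _; rewrite -mulr_sumr -mulr_suml divff ?mulr1 //.
have [j Aij_gt0] := A_row i.
rewrite lt0r_neq0 // (bigD1 j) //= ltr_pwDl ?mulr_gt0 //.
by apply: sumr_ge0 => k _; rewrite mulr_ge0 // ltW.
Qed.

Lemma sum_sqr_diff (R : comNzRingType) (n : nat) (f : 'I_n -> R) :
  \sum_(j < n) \sum_(k < n) (f j - f k) ^+ 2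
    = 2 * (n%:R * \sum_(j < n) f j ^+ 2 - (\sum_(j < n) f j) ^+ 2).
Proof.
set F := \sum_(j < n) f j ^+ 2; set S := \sum_(j < n) f j.
have sum_const (x : R) : \sum_(k < n) x = n%:R * x.
  by rewrite sumr_const card_ord mulr_natl.
have row_sum j : \sum_(k < n) (f j - f k) ^+ 2 = n%:R * f j ^+ 2 + F - 2 * f j * S.
  rewrite (eq_bigr (fun k => (f j ^+ 2 + f k ^+ 2) - 2 * f j * f k)); last first.
    by move=> k _; ring.
  by rewrite sumrB big_split /= sum_const -mulr_sumr.
rewrite (eq_bigr _ (fun j _ => row_sum j)) sumrB big_split /= sum_const.
rewrite -mulr_sumr -mulr_suml -mulr_sumr -/F -/S.
ring.
Qed.

Lemma mem_prefix_set (n : nat) (s : 'S_n) (k : nat) (i : 'I_n) :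
  (s i \in prefix_set s k) = (i < k)%N.
Proof.
apply/imsetP/idP => [[i' i'_lt /perm_inj ->]|i_lt]; first by rewrite inE in i'_lt.
by exists i; rewrite ?inE.
Qed.

Section PrefixMargins.
Variables (R : realFieldType) (n : nat) (f : 'I_n -> R) (s : 'S_n).
Hypothesis f_sorted : forall i j : 'I_n, (i <= j)%N -> f (s i) <= f (s j).
Variables (a b : 'I_n).
Hypothesis b_succ_a : b = a.+1 :> nat.

Lemma margin_cond_prefix_half_gap :
  margin_cond f (prefix_set s b) ((f (s b) - f (s a)) / 2).
Proof.
have gap_ge0 : f (s a) <= f (s b) by apply: f_sorted; rewrite b_succ_a.
split; first by lra.
exists ((f (s b) + f (s a)) / 2); split; [|split; first by lra].
- move=> j; rewrite -(permKV s j) mem_prefix_set => j_lt.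
  have : f (s (s^-1 j)%g) <= f (s a) by apply: f_sorted; rewrite -ltnS -b_succ_a.
  lra.
- move=> j; rewrite -(permKV s j) mem_prefix_set -leqNgt => j_ge.
  have : f (s b) <= f (s (s^-1 j)%g) by apply: f_sorted.
  lra.
Qed.

Lemma margin_cond_prefix_le_half_gap (g : R) :
  margin_cond f (prefix_set s b) g -> g <= (f (s b) - f (s a)) / 2.
Proof.
move=> [_ [nu [below_nu [_ above_nu]]]].
have := below_nu (s a); rewrite mem_prefix_set b_succ_a ltnSn => /(_ isT).
have := above_nu (s b); rewrite mem_prefix_set ltnn => /(_ isT).
lra.
Qed.

Lemma is_margin_prefix_half_gap :
  is_margin f (prefix_set s b) ((f (s b) - f (s a)) / 2).
Proof.
split; [exact: margin_cond_prefix_half_gap | exact: margin_cond_prefix_le_half_gap].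
Qed.

End PrefixMargins.

Section MaximalPrefixMargin.
Variables (R : realFieldType) (n : nat) (f : 'I_n -> R) (s : 'S_n) (gamma : R).
Hypothesis f_sorted : forall i j : 'I_n, (i <= j)%N -> f (s i) <= f (s j).
Hypothesis gamma_max : forall (k : nat) (g : R), (1 <= k)%N -> (k <= n - 1)%N ->
  is_margin f (prefix_set s k) g -> g <= gamma.

Lemma sorted_gap_le (a b : 'I_n) :
  b = a.+1 :> nat -> f (s b) - f (s a) <= 2 * gamma.
Proof.
move=> b_succ_a.
have b_ge1 : (1 <= b)%N by rewrite b_succ_a.
have b_le : (b <= n - 1)%N by have := ltn_ord b; lia.
have := gamma_max b_ge1 b_le (is_margin_prefix_half_gap f_sorted b_succ_a).
lra.
Qed.

Lemma sorted_spread_le (d : nat) (a b : 'I_n) :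
  b = (a + d)%N :> nat -> f (s b) - f (s a) <= 2 * gamma * d%:R.
Proof.
elim: d b => [|d IHd] b b_eq.
  by rewrite (_ : b = a) ?subrr ?mulr0 //; apply: ord_inj; rewrite b_eq addn0.
have mid_lt : (a + d < n)%N by have := ltn_ord b; lia.
have := IHd (Ordinal mid_lt) erefl.
have := @sorted_gap_le (Ordinal mid_lt) b (etrans b_eq (addnS _ _)).
rewrite -[d.+1%:R]natr1 mulrDr mulr1; lra.
Qed.

Lemma sqr_diff_le (j k : 'I_n) :
  0 <= gamma -> (f j - f k) ^+ 2 <= (2 * gamma * n%:R) ^+ 2.
Proof.
move=> gamma_ge0.
have spread (a b : 'I_n) : (a <= b)%N -> 0 <= f (s b) - f (s a) <= 2 * gamma * n%:R.
  move=> ab; have := f_sorted ab.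
  have := @sorted_spread_le (b - a) a b (esym (subnKC ab)).
  have : 2 * gamma * (b - a)%N%:R <= 2 * gamma * n%:R.
    by rewrite ler_wpM2l ?mulr_ge0 // ler_nat; have := ltn_ord b; lia.
  move=> *; apply/andP; split; lra.
rewrite -(permKV s j) -(permKV s k).
case: (leqP (s^-1 j)%g (s^-1 k)%g) => [le|/ltnW le];
  by have /andP[? ?] := spread _ _ le; nra.
Qed.

End MaximalPrefixMargin.

Theorem proposition6p5 (R : realFieldType) (m n : nat) (A : 'M[R]_(m, n))
  (hA : forall i j, 0 <= A i j)
  (hrow : forall i, exists j, 0 < A i j)
  (hn : (2 <= n)%N)
  (r : 'I_m -> R) (c : 'I_n -> R)
  (hr : forall i, 0 <= r i) (hc : forall j, 0 <= c j)
  (hsum : \sum_(i < m) r i = \sum_(j < n) c j)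
  (y : 'I_n -> R) (hy : forall j, 0 < y j)
  (s : 'S_n)
  (hs : forall i j : 'I_n, (i <= j)%N ->
          cAr A r y (s i) - c (s i) <= cAr A r y (s j) - c (s j))
  (gamma : R)
  (hgam : exists k : nat, [/\ (1 <= k)%N, (k <= n - 1)%N &
            is_margin (fun j => cAr A r y j - c j) (prefix_set s k) gamma])
  (hmax : forall (k : nat) (g : R), (1 <= k)%N -> (k <= n - 1)%N ->
            is_margin (fun j => cAr A r y j - c j) (prefix_set s k) g -> g <= gamma) :
  1 / (2 * n%:R ^+ 3) * \sum_(j < n) (cAr A r y j - c j) ^+ 2 <= gamma ^+ 2.
Proof.
set f := fun j => cAr A r y j - c j; set F := \sum_(j < n) f j ^+ 2.
have gamma_ge0 : 0 <= gamma by case: hgam => k [_ _ [[]]].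
have f_sum0 : \sum_(j < n) f j = 0 by rewrite sumrB sum_cAr // hsum subrr.
have sum_const (x : R) : \sum_(k < n) x = n%:R * x.
  by rewrite sumr_const card_ord mulr_natl.
have double_sum : \sum_(j < n) \sum_(k < n) (f j - f k) ^+ 2 = 2 * (n%:R * F).
  by rewrite sum_sqr_diff f_sum0 expr0n subr0.
have : \sum_(j < n) \sum_(k < n) (f j - f k) ^+ 2
    <= \sum_(j < n) \sum_(k < n) (2 * gamma * n%:R) ^+ 2.
  apply: ler_sum => j _; apply: ler_sum => k _.
  exact: (sqr_diff_le hs hmax _ _ gamma_ge0).
rewrite double_sum !sum_const.
have n_gt0 : 0 < n%:R :> R by rewrite ltr0n; lia.
rewrite mul1r ler_pdivrMl ?mulr_gt0 ?exprn_gt0 // -/F.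
nra.
Qed.
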